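(* Let $X$ be the vertex set of a connected simplicial graph with bounded geometry, equipped with the shortest path metric, which is $\delta$-hyperbolic, and fix $e\in X$ and $p\geq 1$. For $x\in X$, $k\in\mathbb{N}$, $n\in\mathbb{N}\setminus\{0\}$, let $F_{x,k,n}$ be the set of all points of $X\setminus B(e;3\delta)$ lying on $g([n,2n])$ for some geodesic $g$ from some $y$ with $d(x,y)\leq k$ to $e$ (parametrised by arc length starting at $y$), let $F(x,k,n)\in\ell^p(X)$ be its characteristic function, and set $H(x,n)=\frac{1}{n}\sum_{0\leq k\leq n/4}F(x,k,n)$. Then $\|H(x,n)\|_p^p\preceq n$ for all $x\in X$, $n\geq 1$, and $\|H(x,n)\|_p^p\asymp n$ for all $x,n$ with $d(x,e)\geq 2n$.
   Context: Bounded geometry: for every $r$ there is a uniform bound on the cardinality of balls of radius $r$. $\delta$-hyperbolicity in the Rips sense. $A\preceq B$ means there is a constant $C$ (independent of $x,n$) with $A\leq CB+C$; $A\asymp B$ means $A\preceq B$ and $B\preceq A$. *)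

From HB Require Import structures.
From mathcomp Require Import all_boot all_order all_algebra.
From mathcomp Require Import all_classical all_reals all_analysis.
Set Implicit Arguments. Unset Strict Implicit. Unset Printing Implicit Defensive.
Import Order.TTheory GRing.Theory Num.Theory.
Local Open Scope classical_set_scope.
Local Open Scope ring_scope.

Section Graphs.
Variable X : choiceType.

Definition simplicial (adj : X -> X -> Prop) : Prop :=
  (forall x y, adj x y -> adj y x) /\ (forall x, ~ adj x x).

Definition walk (adj : X -> X -> Prop) (x y : X) (L : nat) : Prop :=
  exists w : nat -> X, w 0%N = x /\ w L = y /\
    forall i, (i < L)%N -> adj (w i) (w i.+1).

Definition connected_graph (adj : X -> X -> Prop) : Prop :=
  forall x y, exists L, walk adj x y L.

Definition path_metric (adj : X -> X -> Prop) (d : X -> X -> nat) : Prop :=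
  forall x y, walk adj x y (d x y) /\ (forall L, walk adj x y L -> (d x y <= L)%N).

Definition bounded_geometry (d : X -> X -> nat) : Prop :=
  forall r : nat, exists N : nat, forall x : X,
    exists s : seq X, (size s <= N)%N /\ (forall y, (d x y <= r)%N -> y \in s).

Definition natdist (i j : nat) : nat := (i - j + (j - i))%N.

Definition geodesic (d : X -> X -> nat) (g : nat -> X) (L : nat) (x y : X) : Prop :=
  g 0%N = x /\ g L = y /\ L = d x y /\
  forall i j, (i <= L)%N -> (j <= L)%N -> d (g i) (g j) = natdist i j.

Definition on_geod (g : nat -> X) (L : nat) (z : X) : Prop :=
  exists t, (t <= L)%N /\ g t = z.

Definition rips_hyperbolic {R : realType} (d : X -> X -> nat) (delta : R) : Prop :=
  forall (a b c : X) (g1 g2 g3 : nat -> X),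
    geodesic d g1 (d a b) a b -> geodesic d g2 (d b c) b c ->
    geodesic d g3 (d c a) c a ->
    forall t, (t <= d a b)%N ->
      exists z, (on_geod g2 (d b c) z \/ on_geod g3 (d c a) z) /\
                ((d (g1 t) z)%:R <= delta).

Definition Fset {R : realType} (d : X -> X -> nat) (delta : R) (e x : X) (k n : nat)
  : set X :=
  [set z | ~ ((d e z)%:R <= 3 * delta) /\
     exists (y : X) (g : nat -> X), (d x y <= k)%N /\ geodesic d g (d y e) y e /\
       exists t, (n <= t <= n.*2)%N /\ (t <= d y e)%N /\ g t = z].

Definition Hfun {R : realType} (d : X -> X -> nat) (delta : R) (e x : X) (n : nat)
  : X -> R :=
  fun z => n%:R^-1 * \sum_(0 <= k < (n %/ 4).+1) \1_(Fset d delta e x k n) z.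

Definition Hnormp {R : realType} (d : X -> X -> nat) (delta : R) (e x : X) (n : nat)
  (p : R) : \bar R :=
  (\esum_(z in [set: X]) ((Hfun d delta e x n z) `^ p)%:E)%E.

End Graphs.

From HB Require Import structures.
From mathcomp Require Import all_boot all_order all_algebra.
From mathcomp Require Import all_classical all_reals all_analysis.
From mathcomp Require Import zify.
From mathcomp.algebra_tactics Require Import lra.
Set Implicit Arguments. Unset Strict Implicit. Unset Printing Implicit Defensive.
Import Order.TTheory GRing.Theory Num.Theory.
Local Open Scope classical_set_scope.
Local Open Scope ring_scope.

(* Fix a geodesic G from e to x. By delta-slimness of the triangle (y, e, x), a point at
   distance t in [n, 2n] from y on a geodesic [y, e] is delta-close either to [x, y], which
   has length at most k <= n/4 and therefore forces the point to lie O(delta) from x, or to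
   G, at a point G s with d(e, x) - s <= 3n + O(delta). So the support of H(x, n) lies in
   O(n) balls of radius O(delta); bounded geometry makes it O(n) points, and H <= 2.
   Conversely, if d(x, e) >= 2n, then taking y = x, the points at distance t in [n, 2n - K]
   (K > 3 delta) from x on a geodesic [x, e] lie in every F_{x,k,n}, where H >= 1/4. *)

Section Walks.
Variables (X : choiceType) (adj : X -> X -> Prop).

Lemma walk_cat x y z L1 L2 :
  walk adj x y L1 -> walk adj y z L2 -> walk adj x z (L1 + L2).
Proof.
move=> [w1 [w1_0 [w1_L w1_adj]]] [w2 [w2_0 [w2_L w2_adj]]].
exists (fun i => if (i <= L1)%N then w1 i else w2 (i - L1)%N).
split; first by rewrite leq0n.
split.
  case: ifPn => [le_L|]; last by rewrite addKn.
  have L2_0 : L2 = 0%N by lia.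
  by rewrite L2_0 addn0 w1_L -w2_0 -w2_L L2_0.
move=> i lt_i; case: (ltngtP i L1) => [lt_iL1|lt_L1i|eq_i].
- exact: w1_adj.
- rewrite (_ : (i.+1 - L1 = (i - L1).+1)%N); last lia.
  apply: w2_adj; lia.
- subst i; rewrite w1_L -w2_0 (_ : (L1.+1 - L1 = 1)%N); last lia.
  apply: w2_adj; lia.
Qed.

Lemma walk_rev x y L :
  (forall a b, adj a b -> adj b a) -> walk adj x y L -> walk adj y x L.
Proof.
move=> adj_sym [w [w_0 [w_L w_adj]]].
exists (fun i => w (L - i)%N); split; first by rewrite subn0.
split; first by rewrite subnn.
move=> i lt_iL; apply: adj_sym.
rewrite (_ : (L - i = (L - i.+1).+1)%N); last lia.
apply: w_adj; lia.
Qed.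

Lemma walk_sub (w : nat -> X) L i j :
  (forall k, (k < L)%N -> adj (w k) (w k.+1)) -> (i <= j <= L)%N ->
  walk adj (w i) (w j) (j - i).
Proof.
move=> w_adj /andP[le_ij le_jL].
exists (fun k => w (i + k)%N); split; first by rewrite addn0.
split; first by rewrite subnKC.
move=> k lt_k; rewrite addnS; apply: w_adj; lia.
Qed.

End Walks.

Section PathMetric.
Variables (X : choiceType) (adj : X -> X -> Prop) (d : X -> X -> nat).
Hypothesis adj_sym : forall x y, adj x y -> adj y x.
Hypothesis d_path : path_metric adj d.

Lemma dist_le_walk x y L : walk adj x y L -> (d x y <= L)%N.
Proof. exact: (d_path x y).2. Qed.

Lemma dist_xx x : d x x = 0%N.
Proof.
apply/eqP; rewrite -leqn0; apply: dist_le_walk.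
by exists (fun=> x); split=> //; split=> // i; rewrite ltn0.
Qed.

Lemma distC x y : d x y = d y x.
Proof.
by apply/eqP; rewrite eqn_leq !dist_le_walk //; apply: walk_rev => //; exact: (d_path _ _).1.
Qed.

Lemma dist_triangle x y z : (d x z <= d x y + d y z)%N.
Proof. by apply/dist_le_walk/walk_cat; [exact: (d_path _ _).1 | exact: (d_path _ _).1]. Qed.

Lemma geodesic_exists a b : exists g, geodesic d g (d a b) a b.
Proof.
have [[w [w_0 [w_L w_adj]]] _] := d_path a b.
have dist_w i j : (i <= j <= d a b)%N -> d (w i) (w j) = (j - i)%N.
  move=> ij_le; apply/eqP; rewrite eqn_leq (dist_le_walk (walk_sub w_adj ij_le)) /=.
  have le_ai : (d a (w i) <= i)%N.
    rewrite -w_0 -[i in (_ <= i)%N]subn0; apply/dist_le_walk/(walk_sub w_adj); lia.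
  have le_jb : (d (w j) b <= d a b - j)%N.
    rewrite -[in d _ b]w_L; apply/dist_le_walk/(walk_sub w_adj); lia.
  have := dist_triangle a (w i) (w j); have := dist_triangle a (w j) b; lia.
exists w; do 3!split=> //.
move=> i j le_i le_j; rewrite /natdist; case: (leqP i j) => [le_ij|lt_ji].
  by rewrite dist_w; lia.
by rewrite distC dist_w; lia.
Qed.

End PathMetric.

Section Geodesics.
Variables (X : choiceType) (d : X -> X -> nat) (g : nat -> X) (L : nat) (x y : X).
Hypothesis g_geod : geodesic d g L x y.

Lemma geodesic_dist_start t : (t <= L)%N -> d x (g t) = t.
Proof.
by case: g_geod => [<- [_ [_ g_dist]]] le_t; rewrite g_dist // /natdist; lia.
Qed.

Lemma geodesic_dist_end t : (t <= L)%N -> d (g t) y = (L - t)%N.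
Proof.
by case: g_geod => [_ [<- [_ g_dist]]] le_t; rewrite g_dist // /natdist; lia.
Qed.

Lemma geodesic_inj i j :
  (forall z, d z z = 0%N) -> (i <= L)%N -> (j <= L)%N -> g i = g j -> i = j.
Proof.
case: g_geod => [_ [_ [_ g_dist]]] dist0 le_i le_j eq_g.
by have := g_dist i j le_i le_j; rewrite eq_g dist0 /natdist; lia.
Qed.

End Geodesics.

Section FiniteSupportSums.
Variables (R : realType) (T : choiceType) (f : T -> R).
Hypothesis f_ge0 : forall z, 0 <= f z.

Lemma esum_le_finite_support (s : seq T) (M : R) :
  0 <= M -> (forall z, f z <= M) -> (forall z, z \notin s -> f z = 0) ->
  (\esum_(z in [set: T]) (f z)%:E <= ((size s)%:R * M)%:E)%E.
Proof.
move=> M_ge0 f_leM f_out.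
have -> : (\esum_(z in [set: T]) (f z)%:E = \esum_(z in [set` undup s]) (f z)%:E)%E.
  rewrite [RHS]esum_mkcond; apply: eq_esum => z _.
  by rewrite mem_setE mem_undup; case: ifPn => // /f_out ->.
rewrite esum_fset; last 2 first.
- exact: finite_seq.
- by move=> z _; rewrite lee_fin.
rewrite -fsbig_seq ?undup_uniq // sumEFin lee_fin.
apply: (@le_trans _ _ (\sum_(z <- undup s) M)); first exact: ler_sum.
rewrite big_const_seq count_predT iter_addr_0 -[M *+ _]mulr_natl.
by apply: ler_wpM2r => //; rewrite ler_nat size_undup.
Qed.

Lemma esum_ge_uniq (s : seq T) (m : R) :
  uniq s -> (forall z, z \in s -> m <= f z) ->
  (((size s)%:R * m)%:E <= \esum_(z in [set: T]) (f z)%:E)%E.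
Proof.
move=> s_uniq m_le; apply: esum_ge; exists [set` s].
  by split=> //; exact: finite_seq.
rewrite -fsbig_seq // sumEFin lee_fin big_seq.
apply: le_trans (ler_sum _ m_le); rewrite -big_seq.
by rewrite big_const_seq count_predT iter_addr_0 mulr_natl.
Qed.

End FiniteSupportSums.

Lemma size_flatten_map_le (T U : Type) (f : U -> seq T) (s : seq U) N :
  (forall u, (size (f u) <= N)%N) -> (size (flatten (map f s)) <= size s * N)%N.
Proof. by move=> f_le; elim: s => //= u s IH; rewrite size_cat mulSn leq_add. Qed.

Lemma lee_affine_bound (R : realType) (r : \bar R) (a b c C : R) :
  0 < b -> (0 <= r)%E -> (((a - c) * b)%:E <= r)%E -> c <= C -> b^-1 <= C ->
  (a%:E <= C%:E * r + C%:E)%E.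
Proof.
move=> b_gt0 + + c_le invb_le.
have C_gt0 : 0 < C by apply: lt_le_trans invb_le; rewrite invr_gt0.
case: r => [r| |]; last by [].
  rewrite !lee_fin -ler_pdivlMr // => r_ge0 ac_le.
  have : r / b <= C * r by rewrite mulrC ler_wpM2r.
  lra.
by move=> _ _; rewrite mulry gtr0_sg // mul1e addye // leey.
Qed.

Section HValues.
Variables (R : realType) (X : choiceType) (d : X -> X -> nat) (delta : R) (e x : X).
Variables (n : nat) (z : X).

Lemma Hfun_ge0 : 0 <= Hfun d delta e x n z.
Proof. by rewrite mulr_ge0 // ?invr_ge0 // sumr_ge0. Qed.

Lemma Hfun_le2 : (0 < n)%N -> Hfun d delta e x n z <= 2.
Proof.
move=> n_gt0; rewrite /Hfun ler_pdivrMl ?ltr0n //.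
apply: (@le_trans _ _ (\sum_(0 <= k < (n %/ 4).+1) (1 : R))).
  by apply: ler_sum => k _; rewrite indicE lern1 leq_b1.
by rewrite sumr_const_nat subn0 -natrM ler_nat; lia.
Qed.

Lemma Hfun_eq0 : (forall k, (k <= n %/ 4)%N -> ~ Fset d delta e x k n z) ->
  Hfun d delta e x n z = 0.
Proof.
move=> notF; rewrite /Hfun big1_seq ?mulr0 // => k.
rewrite mem_index_iota ltnS => /andP[_ /andP[_ /notF k_notF]].
by rewrite indicE memNset.
Qed.

Lemma Hfun_ge_quarter : (0 < n)%N -> (forall k, Fset d delta e x k n z) ->
  4^-1 <= Hfun d delta e x n z.
Proof.
move=> n_gt0 allF; rewrite /Hfun.
have -> : \sum_(0 <= k < (n %/ 4).+1) \1_(Fset d delta e x k n) z = ((n %/ 4).+1)%:R :> R.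
  rewrite -[in RHS](subn0 (n %/ 4).+1) -sumr_const_nat; apply: eq_bigr => k _.
  by rewrite indicE mem_set.
by rewrite ler_pdivlMl ?ltr0n // ler_pdivrMr // -natrM ler_nat; lia.
Qed.

End HValues.

Section UpperBound.
Variables (R : realType) (X : choiceType) (adj : X -> X -> Prop).
Variables (d : X -> X -> nat) (delta : R) (e : X).
Hypothesis adj_sym : forall x y, adj x y -> adj y x.
Hypothesis d_path : path_metric adj d.
Hypothesis delta_ge0 : 0 <= delta.
Hypothesis d_hyp : rips_hyperbolic d delta.

Lemma Fset_near_x_or_geodesic (G : nat -> X) (r : nat) x k n z :
  geodesic d G (d e x) e x -> 6 * delta <= r%:R -> (4 * k <= n)%N ->
  Fset d delta e x k n z ->
  (d x z <= r)%N \/ exists2 s, (s <= d e x <= s + 3 * n + r)%N & (d (G s) z <= r)%N.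
Proof.
move=> G_geod r_ge k_le [_ [y [g [xy_le [g_geod [t [/andP[n_le_t t_le2n] [t_le <-]]]]]]]].
have [h h_geod] := geodesic_exists adj_sym d_path x y.
have [w [w_on w_close]] := d_hyp g_geod G_geod h_geod t_le.
have yz_eq : d y (g t) = t := geodesic_dist_start g_geod t_le.
have xz_le : (d x (g t) <= k + t)%N.
  by apply: leq_trans (dist_triangle d_path x y (g t)) _; rewrite yz_eq leq_add2r.
have r_ge0 : (0 : R) <= r%:R by [].
case: w_on w_close => [[s [s_le <-]] | [s [s_le <-]]] zw_close.
- have zw_le : (d (g t) (G s) <= r)%N by rewrite -(ler_nat R); lra.
  have wx_eq : d (G s) x = (d e x - s)%N := geodesic_dist_end G_geod s_le.
  have := dist_triangle d_path (G s) (g t) x.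
  rewrite wx_eq (distC adj_sym d_path (g t)) (distC adj_sym d_path (G s)) => wx_le.
  by right; exists s; [apply/andP; split; lia | rewrite (distC adj_sym d_path)].
- have wy_eq : d (h s) y = (d x y - s)%N := geodesic_dist_end h_geod s_le.
  have := dist_triangle d_path y (h s) (g t).
  rewrite yz_eq (distC adj_sym d_path y (h s)) (distC adj_sym d_path (h s) (g t)) => t_le'.
  have xz_le' : (3 * d x (g t) <= 5 * d (g t) (h s))%N by lia.
  move: xz_le'; rewrite -(ler_nat R) !natrM => xz_le'.
  by left; rewrite -(ler_nat R); lra.
Qed.

Lemma Hfun_support (G : nat -> X) (r : nat) (ball : X -> seq X) x n z :
  geodesic d G (d e x) e x -> 6 * delta <= r%:R ->
  (forall c y, (d c y <= r)%N -> y \in ball c) ->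
  z \notin ball x ++ flatten [seq ball (G s) | s <- iota (d e x - (3 * n + r)) (3 * n + r).+1] ->
  Hfun d delta e x n z = 0.
Proof.
move=> G_geod r_ge ball_cover; rewrite mem_cat negb_or => /andP[z_notx z_notG].
apply: Hfun_eq0 => k k_le z_in.
have k_le4 : (4 * k <= n)%N by lia.
have [xz_le|[s s_bounds Gz_le]] := Fset_near_x_or_geodesic G_geod r_ge k_le4 z_in.
- by rewrite (ball_cover _ _ xz_le) in z_notx.
- move/flatten_mapP: z_notG; apply; exists s; last exact: ball_cover.
  by rewrite mem_iota; lia.
Qed.

Lemma Hnormp_le_cover (G : nat -> X) (r N : nat) (ball : X -> seq X) x n p :
  (0 < n)%N -> 0 < p -> geodesic d G (d e x) e x -> 6 * delta <= r%:R ->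
  (forall c y, (d c y <= r)%N -> y \in ball c) -> (forall c, size (ball c) <= N)%N ->
  (Hnormp d delta e x n p <= ((N * (r + 4) * (n + 1))%:R * 2 `^ p)%:E)%E.
Proof.
move=> n_gt0 p_gt0 G_geod r_ge ball_cover ball_size.
pose window := iota (d e x - (3 * n + r)) (3 * n + r).+1.
pose s := ball x ++ flatten [seq ball (G i) | i <- window].
have s_size : (size s <= N * (r + 4) * (n + 1))%N.
  rewrite size_cat; have := size_flatten_map_le window (fun i => ball_size (G i)).
  by rewrite size_iota; have := ball_size x; nia.
have H_le z : Hfun d delta e x n z `^ p <= 2 `^ p.
  by apply: (ge0_ler_powR (ltW p_gt0)); rewrite ?nnegrE ?Hfun_ge0 ?Hfun_le2.
have H_out z : z \notin s -> Hfun d delta e x n z `^ p = 0.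
  by move/(Hfun_support G_geod r_ge ball_cover) ->; rewrite powR0 ?gt_eqF.
apply: le_trans (esum_le_finite_support (fun z => powR_ge0 _ _) (powR_ge0 _ _) H_le H_out) _.
by rewrite lee_fin ler_wpM2r ?powR_ge0 // ler_nat.
Qed.

Lemma Hnormp_upper p : bounded_geometry d -> 0 < p ->
  exists2 C : R, 0 <= C & forall x n, (0 < n)%N ->
    (Hnormp d delta e x n p <= (C * n%:R + C)%:E)%E.
Proof.
move=> bounded p_gt0.
pose r := (Num.truncn (6 * delta)).+1.
have r_ge : 6 * delta <= r%:R by apply/ltW/truncnS_gt.
have [N ball_ex] := bounded r.
have [ball ball_spec] := choice ball_ex.
exists ((N * (r + 4))%:R * 2 `^ p); first by rewrite mulr_ge0 ?powR_ge0.
move=> x n n_gt0; have [G G_geod] := geodesic_exists adj_sym d_path e x.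
apply: le_trans (Hnormp_le_cover n_gt0 p_gt0 G_geod r_ge
  (fun c => (ball_spec c).2) (fun c => (ball_spec c).1)) _.
by rewrite lee_fin natrM natrD mulrDr mulr1 mulrDl mulrAC.
Qed.

End UpperBound.

Section LowerBound.
Variables (R : realType) (X : choiceType) (adj : X -> X -> Prop).
Variables (d : X -> X -> nat) (delta : R) (e : X).
Hypothesis adj_sym : forall x y, adj x y -> adj y x.
Hypothesis d_path : path_metric adj d.

Lemma geodesic_to_e_in_Fset (g : nat -> X) (K : nat) x k n t :
  3 * delta < K%:R -> geodesic d g (d x e) x e ->
  (n <= t <= n.*2)%N -> (t + K <= d x e)%N -> Fset d delta e x k n (g t).
Proof.
move=> K_gt g_geod t_bounds tK_le; split.
  apply/negP; rewrite -ltNge (distC adj_sym d_path) (geodesic_dist_end g_geod); last lia.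
  by apply: lt_le_trans K_gt _; rewrite ler_nat; lia.
exists x, g; split; first by rewrite (dist_xx d_path).
by split=> //; exists t; split=> //; split=> //; lia.
Qed.

Lemma Hnormp_ge (K : nat) x n p :
  (0 < n)%N -> 0 <= p -> 3 * delta < K%:R -> (n.*2 <= d x e)%N ->
  ((((n - K)%N)%:R * 4^-1 `^ p)%:E <= Hnormp d delta e x n p)%E.
Proof.
move=> n_gt0 p_ge0 K_gt n_le.
have [g g_geod] := geodesic_exists adj_sym d_path x e.
pose s := [seq g (n + i)%N | i <- iota 0 (n - K)].
have s_uniq : uniq s.
  rewrite map_inj_in_uniq ?iota_uniq // => i j; rewrite !mem_iota => i_lt j_lt eq_g.
  by apply: (@addnI n); apply: (geodesic_inj g_geod (dist_xx d_path) _ _ eq_g); lia.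
have -> : (n - K)%N = size s by rewrite size_map size_iota.
rewrite /Hnormp; apply: (esum_ge_uniq s_uniq) => _ /mapP[i i_in ->].
rewrite mem_iota in i_in.
apply: ge0_ler_powR; rewrite ?nnegrE ?invr_ge0 ?Hfun_ge0 //.
apply: Hfun_ge_quarter => // k; apply: (geodesic_to_e_in_Fset k K_gt g_geod); lia.
Qed.

Lemma Hnormp_lower p : 0 <= p ->
  exists2 C : R, 0 <= C & forall x n, (0 < n)%N -> (n.*2 <= d x e)%N ->
    ((n%:R)%:E <= C%:E * Hnormp d delta e x n p + C%:E)%E.
Proof.
move=> p_ge0.
pose K := (Num.truncn (3 * delta)).+1.
have K_gt : 3 * delta < K%:R by exact: truncnS_gt.
exists ((4^-1 `^ p)^-1 + K%:R); first by rewrite addr_ge0 ?invr_ge0 ?powR_ge0.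
move=> x n n_gt0 n_le.
apply: (@lee_affine_bound _ _ _ (4^-1 `^ p) K%:R).
- by rewrite powR_gt0 // invr_gt0.
- by apply: esum_ge0 => z _; rewrite lee_fin powR_ge0.
- apply: le_trans (Hnormp_ge n_gt0 p_ge0 K_gt n_le).
  rewrite lee_fin ler_wpM2r ?powR_ge0 //.
  by rewrite lerBlDr -natrD ler_nat; lia.
- by rewrite lerDr invr_ge0 powR_ge0.
- by rewrite lerDl.
Qed.

End LowerBound.

Theorem lemma3p5 (R : realType) (X : choiceType) (adj : X -> X -> Prop)
  (d : X -> X -> nat) (delta : R) (e : X) (p : R) :
  simplicial adj -> connected_graph adj -> path_metric adj d ->
  bounded_geometry d -> 0 <= delta -> rips_hyperbolic d delta -> 1 <= p ->
  (exists C : R, forall (x : X) (n : nat), (0 < n)%N ->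
      (Hnormp d delta e x n p <= (C * n%:R + C)%:E)%E) /\
  (exists C : R, forall (x : X) (n : nat), (0 < n)%N -> (n.*2 <= d x e)%N ->
      (Hnormp d delta e x n p <= (C * n%:R + C)%:E)%E /\
      ((n%:R)%:E <= C%:E * Hnormp d delta e x n p + C%:E)%E).
Proof.
(* Connectedness is already implicit in d being a total path metric. *)
move=> [adj_sym _] _ d_path bounded delta_ge0 d_hyp p_ge1.
have p_gt0 : 0 < p by apply: lt_le_trans p_ge1.
have [Cu Cu_ge0 upper] := Hnormp_upper e adj_sym d_path delta_ge0 d_hyp bounded p_gt0.
have [Cl Cl_ge0 lower] := Hnormp_lower delta e adj_sym d_path (ltW p_gt0).
split; first by exists Cu.
exists (Cu + Cl) => x n n_gt0 n_le; split.
  apply: le_trans (upper x n n_gt0) _; rewrite lee_fin.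
  by rewrite lerD ?lerDl //; apply: ler_wpM2r; rewrite ?lerDl.
apply: le_trans (lower x n n_gt0 n_le) _.
apply: leeD; last by rewrite lee_fin lerDr.
apply: lee_pmul; rewrite ?lee_fin ?lerDr //.
by apply: esum_ge0 => z _; rewrite lee_fin powR_ge0.
Qed.
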